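(* Let $\alpha\neq\beta$, let $(g_n)$ be as in the context, and set $w=\dfrac{\beta-x}{\beta-\alpha}$. Then for every $n\ge1$, $$g_n(x)=\frac1n\,[z^{n-1}]\;\frac{1}{(1-z)^2}\left(\frac{(\alpha-\beta)zw+\beta}{1-zw}\right)^{n},$$ where $[z^{m}]F(z)$ denotes the coefficient of $z^m$ in the power series expansion of $F$ in $z$.
   Context: Fix complex numbers $\alpha\neq\beta$. Define polynomials $g_n(x)\in\mathbb{C}[x]$ recursively by $g_0(x)=1$ and, for $n\ge1$, $$(x-\alpha)(\alpha-\beta)^{n-1}g_n(x)=\alpha(x-\beta)^n g_{n-1}(\alpha)-x(\alpha-\beta)^n g_{n-1}(x).$$ (The right-hand side vanishes at $x=\alpha$, so it is divisible by $x-\alpha$ and $g_n$ is a uniquely determined polynomial.) *)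

(* Formal power series over a field are represented by their
   coefficient sequences  nat -> K. *)
From HB Require Import structures.
From mathcomp Require Import all_boot all_order all_algebra.
Set Implicit Arguments. Unset Strict Implicit. Unset Printing Implicit Defensive.
Import Order.TTheory GRing.Theory Num.Theory.
Local Open Scope ring_scope.

Section FPS.
Variable K : fieldType.

Definition fps_mul (f g : nat -> K) : nat -> K :=
  fun n => \sum_(i < n.+1) f i * g (n - i)%N.

Definition fps_of_poly (p : {poly K}) : nat -> K := fun i => p`_i.

Fixpoint fps_inv_seq (f : nat -> K) (n : nat) : seq K :=
  match n with
  | 0 => [:: (f 0%N)^-1]
  | n'.+1 =>
      let s := fps_inv_seq f n' in
      rcons s (- (f 0%N)^-1 * \sum_(i < n'.+1) f i.+1 * nth 0 s (n' - i)%N)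
  end.

Definition fps_inv (f : nat -> K) : nat -> K := fun n => nth 0 (fps_inv_seq f n) n.

Definition coef_z (m : nat) (F : nat -> K) : K := F m.

End FPS.

From HB Require Import structures.
From mathcomp Require Import all_boot all_order all_algebra.
From mathcomp Require Import ring zify.
Import Order.TTheory GRing.Theory Num.Theory.
Local Open Scope ring_scope.

(* Put y := (x - beta) / (alpha - beta), so that w = y(x).  In the variable y
   the recurrence becomes
     (y - 1) G_n(y) = alpha y^n G_(n-1)(1) - (beta + (alpha - beta) y) G_(n-1)(y),
   which is solved by G_n(y) = sum_(m < n) (1 - m/n) [z^m] phi(z)^n y^m, where
   phi(z) = (beta + (alpha - beta) z) / (1 - z).  Indeed
   phi^n - (z/n) (phi^n)' = phi^(n-1) (phi - z phi'), so G_n is the truncation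
   below degree n of phi G_(n-1), and multiplying that truncation by 1 - z
   telescopes into the right-hand side.  On the other side phi(w z) is the
   series ((alpha - beta) w z + beta) / (1 - w z), and dividing by (1 - z)^2
   turns coefficients into weighted partial sums:
   [z^(n-1)] phi(w z)^n / (1 - z)^2 = sum_(m < n) (n - m) w^m [z^m] phi^n.
   Power series are handled as polynomials modulo z^M. *)

Set Implicit Arguments. Unset Strict Implicit. Unset Printing Implicit Defensive.

Section PolyComRing.
Variable R : comNzRingType.
Implicit Types p S H : {poly R}.

Lemma coef_comp_polyZX c p k : (p \Po (c *: 'X))`_k = c ^+ k * p`_k.
Proof.
rewrite comp_polyE; under eq_bigr do rewrite exprZn scalerA.
rewrite -(poly_def _ (fun i => p`_i * c ^+ i)) coef_poly mulrC.
by case: ltnP => // pk; rewrite nth_default // mulr0.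
Qed.

Lemma take_poly_comp_ZX n c p :
  take_poly n (p \Po (c *: 'X)) = take_poly n p \Po (c *: 'X).
Proof.
apply/polyP => k; rewrite coef_comp_polyZX !coef_take_poly coef_comp_polyZX.
by case: ifP; rewrite ?mulr0.
Qed.

Definition geom n : {poly R} := \poly_(k < n) 1.

Lemma coef_geom n k : (geom n)`_k = (k < n)%:R.
Proof. by rewrite coef_poly; case: ltnP. Qed.

Lemma mul_1subX_geom n : (1 - 'X) * geom n = 1 - 'X^n.
Proof.
rewrite -[in RHS](expr1n _ n) subrXX /geom poly_def; congr (_ * _).
by apply: eq_bigr => i _; rewrite expr1n mul1r scale1r.
Qed.

Lemma coef_geom2 n k : (k < n)%N -> (geom n ^+ 2)`_k = k.+1%:R.
Proof.
move=> kn; rewrite expr2 coefM -[k.+1 in RHS]card_ord -sumr_const.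
apply: eq_bigr => -[i /= ik] _; rewrite !coef_geom (leq_ltn_trans _ kn) //.
by rewrite (leq_ltn_trans (leq_subr i k) kn) mulr1.
Qed.

Definition euler p := 'X * p^`().

Lemma coef_euler p k : (euler p)`_k = k%:R * p`_k.
Proof. by rewrite coefXM coef_deriv; case: k => [|k]; rewrite ?mul0r // mulr_natl. Qed.

Lemma euler_exp p n : euler (p ^+ n.+1) = n.+1%:R *: (p ^+ n * euler p).
Proof.
by rewrite /euler deriv_exp scaler_nat mulrnAr [in RHS]mulrCA [p ^+ n * _]mulrC.
Qed.

Lemma coef_partial_sum n S H k :
  take_poly n ((1 - 'X) * S) = take_poly n H -> (k < n)%N ->
  S`_k = \sum_(j < k.+1) H`_j.
Proof.
move=> SH; have diffE j : (j < n)%N ->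
    S`_j - (if j is j'.+1 then S`_j' else 0) = H`_j.
  move=> jn; have := congr1 (fun p => p`_j) SH.
  by rewrite !coef_take_poly jn mulrBl mul1r coefB coefXM; case: j jn.
elim: k => [|k IH] kn; first by rewrite big_ord1 -(diffE 0%N kn) subr0.
by rewrite big_ord_recr /= -IH ?(ltnW kn) // -(diffE _ kn) addrC subrK.
Qed.

(* Telescoping: the top coefficient -S_(n-1) is minus the partial sum of H
   below degree n, that is H_n - H(1). *)
Lemma mul_1subX_take_poly n S H :
  take_poly n ((1 - 'X) * S) = take_poly n H -> (size H <= n.+1)%N ->
  (1 - 'X) * take_poly n S = H - H.[1] *: 'X^n.
Proof.
move=> SH sH; have psum := coef_partial_sum SH.
rewrite (horner_coef_wide 1 sH); under eq_bigr do rewrite expr1n mulr1.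
apply/polyP => k; rewrite mulrBl mul1r !coefB coefXM !coef_take_poly coefZ coefXn.
case: k => [|k] /=.
  case: n SH sH psum => [|n] _ sH psum /=.
    by rewrite big_ord1 mulr1 !subrr.
  by rewrite psum // big_ord1 mulr0 !subr0.
case: (ltngtP k.+1 n) => kn.
- by rewrite !psum ?(ltnW kn) // big_ord_recr /= addrAC subrr add0r mulr0 subr0.
- by rewrite (nth_default 0 (leq_trans sH kn)) mulr0 !subrr.
- by rewrite psum -kn // [in RHS]big_ord_recr /= mulr1 sub0r opprD addrCA subrr addr0.
Qed.

End PolyComRing.

Arguments geom {R} n.

Section TakePolyField.
Variable K : fieldType.
Implicit Types p q r s : {poly K}.

Lemma take_polyMr n p q : take_poly n (p * take_poly n q) = take_poly n (p * q).
Proof. by rewrite !Pdiv.IdomainMonic.take_poly_modp modp_mul. Qed.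

Lemma take_polyMl n p q : take_poly n (take_poly n p * q) = take_poly n (p * q).
Proof. by rewrite mulrC take_polyMr mulrC. Qed.

Lemma take_polyXn n p m : take_poly n (take_poly n p ^+ m) = take_poly n (p ^+ m).
Proof.
elim: m => [|m IH]; first by rewrite !expr0.
by rewrite !exprS -take_polyMr IH take_polyMr take_polyMl.
Qed.

Lemma take_poly_inv_uniq n p r s :
  take_poly n (p * r) = take_poly n 1 -> take_poly n (p * s) = take_poly n 1 ->
  take_poly n r = take_poly n s.
Proof.
move=> pr1 ps1; rewrite -[r]mulr1 -take_polyMr -ps1 take_polyMr mulrA.
by rewrite [r * p]mulrC -take_polyMl pr1 take_polyMl mul1r.
Qed.

Lemma take_poly_1subX_geom n m :
  take_poly n (((1 - 'X) * geom n) ^+ m) = take_poly n (1 : {poly K}).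
Proof.
have Xn0 : take_poly n ('X^n : {poly K}) = 0 by rewrite -['X^n]mul1r take_polyMXn_0.
by rewrite -take_polyXn mul_1subX_geom raddfB /= Xn0 subr0 take_polyXn expr1n.
Qed.

End TakePolyField.

Section TruncatedSeries.
Variable K : fieldType.
Implicit Types (u v : nat -> K) (p r : {poly K}).

Definition fps_trunc n u : {poly K} := \poly_(i < n) u i.

Lemma coef_fps_trunc n u k : (fps_trunc n u)`_k = if (k < n)%N then u k else 0.
Proof. exact: coef_poly. Qed.

Lemma fps_trunc_poly n p : fps_trunc n (fps_of_poly p) = take_poly n p.
Proof. by []. Qed.

Lemma fps_trunc_mul n u v :
  fps_trunc n (fps_mul u v) = take_poly n (fps_trunc n u * fps_trunc n v).
Proof.
apply/polyP => k; rewrite coef_fps_trunc coef_take_poly; case: ltnP => // kn.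
rewrite coefM; apply: eq_bigr => -[i /= ik] _; rewrite !coef_fps_trunc.
by rewrite (leq_ltn_trans _ kn) // (leq_ltn_trans (leq_subr i k) kn).
Qed.

Lemma size_fps_inv_seq u n : size (fps_inv_seq u n) = n.+1.
Proof. by elim: n => [|n IH] //=; rewrite size_rcons IH. Qed.

Lemma nth_fps_inv_seq u n k : (k <= n)%N -> nth 0 (fps_inv_seq u n) k = fps_inv u k.
Proof.
elim: n k => [|n IH] k kn; first by case: k kn.
rewrite /= nth_rcons size_fps_inv_seq; case: ltnP => kn'; first by rewrite IH.
have -> : k = n.+1 by apply/eqP; rewrite eqn_leq kn kn'.
by rewrite eqxx /fps_inv /= nth_rcons size_fps_inv_seq ltnn eqxx.
Qed.

Lemma fps_invS u n :
  fps_inv u n.+1 = - (u 0%N)^-1 * \sum_(i < n.+1) u i.+1 * fps_inv u (n - i).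
Proof.
rewrite /fps_inv /= nth_rcons size_fps_inv_seq ltnn eqxx; congr (_ * _).
by apply: eq_bigr => i _; rewrite nth_fps_inv_seq // leq_subr.
Qed.

Lemma fps_mul_inv u k : u 0%N != 0 -> fps_mul u (fps_inv u) k = (k == 0%N)%:R.
Proof.
move=> u0; case: k => [|k]; first by rewrite /fps_mul big_ord1 /fps_inv /= mulfV.
rewrite /fps_mul big_ord_recl /= subn0 fps_invS mulrA mulrN mulfV // mulN1r.
by under eq_bigr => i _ do rewrite /bump /= add1n subSS; rewrite addNr.
Qed.

Lemma fps_trunc_inv n p r : p`_0 != 0 -> take_poly n (p * r) = take_poly n 1 ->
  fps_trunc n (fps_inv (fps_of_poly p)) = take_poly n r.
Proof.
move=> p0 pr1; rewrite -[LHS](take_poly_id (size_poly n _)).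
apply: take_poly_inv_uniq pr1.
rewrite -take_polyMl -[take_poly n p]fps_trunc_poly -fps_trunc_mul.
by apply/polyP => k; rewrite coef_fps_trunc coef_take_poly fps_mul_inv // coef1.
Qed.

Lemma fps_inv_1subX2 k : fps_inv (fps_of_poly ((1 - 'X) ^+ 2)) k = k.+1%:R :> K.
Proof.
have p0 : ((1 - 'X) ^+ 2 : {poly K})`_0 != 0.
  by rewrite -horner_coef0 !hornerE subr0 expr1n oner_neq0.
have inv2 : fps_trunc k.+1 (fps_inv (fps_of_poly ((1 - 'X) ^+ 2))) =
            take_poly k.+1 (geom k.+1 ^+ 2).
  by apply: fps_trunc_inv p0 _; rewrite -exprMn take_poly_1subX_geom.
have := congr1 (fun p => p`_k) inv2.
by rewrite coef_fps_trunc coef_take_poly ltnSn coef_geom2.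
Qed.

Lemma fps_mul_inv_1subX2 u k :
  fps_mul (fps_inv (fps_of_poly ((1 - 'X) ^+ 2))) u k =
  \sum_(m < k.+1) (k.+1 - m)%:R * u m.
Proof.
rewrite /fps_mul (reindex_inj rev_ord_inj) /=; apply: eq_bigr => -[i /= ik] _.
by rewrite fps_inv_1subX2 subSS subKn // -subSn.
Qed.

End TruncatedSeries.

Section Recurrence.
Variables (K : fieldType) (a b : K) (M : nat).
Hypothesis charK : [pchar K] =i pred0.

Lemma natr_neq0 n : (0 < n)%N -> n%:R != 0 :> K.
Proof. by move=> n0; rewrite ((pcharf0P K).1 charK) -lt0n. Qed.

Definition phi_num : {poly K} := b%:P + (a - b) *: 'X.

(* (b + (a - b) z) / (1 - z) modulo z^M *)
Definition phi : {poly K} := phi_num * geom M.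

Definition gw_series n := phi ^+ n - n%:R^-1 *: euler (phi ^+ n).

(* g_n written in the variable w *)
Definition gw n := take_poly n (gw_series n).

Lemma coef_gw_series n m : (gw_series n)`_m = (1 - m%:R / n%:R) * (phi ^+ n)`_m.
Proof. by rewrite coefB coefZ coef_euler mulrBl mul1r mulrA [n%:R^-1 * _]mulrC. Qed.

Lemma gw_series_diag n : (0 < n)%N -> (gw_series n)`_n = 0.
Proof. by move=> n0; rewrite coef_gw_series divff ?natr_neq0 // subrr mul0r. Qed.

Lemma gw_seriesE n : gw_series n.+1 = phi ^+ n * (phi - euler phi).
Proof.
by rewrite /gw_series euler_exp scalerA mulVf ?natr_neq0 // scale1r exprSr mulrBr.
Qed.

Lemma gw_seriesS n : gw_series n.+2 = phi * gw_series n.+1.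
Proof. by rewrite !gw_seriesE exprS mulrA. Qed.

Lemma gw1 : (0 < M)%N -> gw 1 = b%:P.
Proof.
move=> M0; apply/polyP => -[|k]; rewrite coef_take_poly coefC //=.
rewrite coef_gw_series mul0r subr0 mul1r expr1 coef0M coef_geom M0 mulr1.
by rewrite coefD coefC coefZ coefX mulr0 addr0.
Qed.

Lemma gw_take n : (0 < n)%N -> gw n.+1 = take_poly n.+1 (phi * gw n).
Proof.
case: n => [//|n] _.
have takeS : take_poly n.+2 (gw_series n.+1) = gw n.+1.
  apply/polyP => k; rewrite /gw !coef_take_poly ltnS leq_eqVlt.
  by case: eqVneq => [->|] //=; rewrite ltnn gw_series_diag.
by rewrite -takeS take_polyMr /gw gw_seriesS.
Qed.

Lemma horner_phi_num1 : phi_num.[1] = a.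
Proof. by rewrite /phi_num hornerD hornerC hornerZ hornerX mulr1 addrC subrK. Qed.

Lemma size_phi_num_gw n : (size (phi_num * gw n)%R <= n.+1)%N.
Proof.
have size_num : (size phi_num <= 2)%N.
  rewrite (leq_trans (size_polyD _ _)) // geq_max (leq_trans (size_polyC_leq1 _)) //.
  by rewrite (leq_trans (size_scale_leq _ _)) // size_polyX.
have size_gw : (size (gw n) <= n)%N := size_take_poly n (gw_series n).
by rewrite (leq_trans (size_polyMleq _ _)) //; lia.
Qed.

Lemma take_poly_1subX_phi n p : (n <= M)%N ->
  take_poly n ((1 - 'X) * (phi * p)) = take_poly n (phi_num * p).
Proof.
move=> nM.
have -> : (1 - 'X) * (phi * p) = phi_num * p - phi_num * p * 'X^M.
  transitivity (phi_num * ((1 - 'X) * geom M) * p); first by rewrite /phi; ring.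
  by rewrite mul_1subX_geom; ring.
by rewrite raddfB /= take_polyMXn (eqP nM) take_poly0l mul0r subr0.
Qed.

Lemma gw_rec n : (0 < n)%N -> (n < M)%N ->
  (1 - 'X) * gw n.+1 = phi_num * gw n - (a * (gw n).[1]) *: 'X^(n.+1).
Proof.
move=> n0 nM; rewrite gw_take // (mul_1subX_take_poly (H := phi_num * gw n)).
- by rewrite hornerM horner_phi_num1.
- exact: take_poly_1subX_phi.
- exact: leq_trans (size_phi_num_gw n) _.
Qed.

Lemma fps_trunc_rhs n w :
  fps_trunc M (fps_mul (fps_of_poly ((((a - b) * w) *: 'X + b%:P) ^+ n))
                       (fps_inv (fps_of_poly ((1 - w *: 'X) ^+ n)))) =
  take_poly M (phi ^+ n \Po (w *: 'X)).
Proof.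
have num_comp : ((a - b) * w) *: 'X + b%:P = phi_num \Po (w *: 'X).
  by rewrite /phi_num comp_polyD comp_polyC comp_polyZ comp_polyX scalerA addrC.
have den_comp : 1 - w *: 'X = (1 - 'X) \Po (w *: 'X).
  by rewrite comp_polyB comp_polyX rmorph1.
have den0 : ((1 - w *: 'X) ^+ n)`_0 != 0.
  by rewrite -horner_coef0 !hornerE subr0 expr1n oner_neq0.
rewrite fps_trunc_mul fps_trunc_poly.
rewrite (fps_trunc_inv (r := geom M ^+ n \Po (w *: 'X)) den0).
  by rewrite take_polyMl take_polyMr num_comp -!rmorphXn -rmorphM /= -exprMn.
rewrite den_comp -!rmorphXn -rmorphM /= -exprMn take_poly_comp_ZX.
by rewrite take_poly_1subX_geom -take_poly_comp_ZX rmorph1.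
Qed.

Section Substitution.
Hypothesis ab : a != b.

Definition wpoly : {poly K} := (a - b)^-1 *: ('X - b%:P).

Lemma mul_subab_wpoly : (a - b)%:P * wpoly = 'X - b%:P.
Proof. by rewrite /wpoly mul_polyC scalerA mulfV ?subr_eq0 // scale1r. Qed.

Lemma mul_subab_wpoly1 : (a - b)%:P * (wpoly - 1) = 'X - a%:P.
Proof.
by rewrite mulrBr mul_subab_wpoly mulr1 -addrA -opprD -polyCD [b + _]addrC subrK.
Qed.

Lemma phi_num_comp_wpoly : phi_num \Po wpoly = 'X.
Proof.
rewrite /phi_num comp_polyD comp_polyC comp_polyZ comp_polyX -mul_polyC.
by rewrite mul_subab_wpoly addrC subrK.
Qed.

Lemma horner_wpoly_a : wpoly.[a] = 1.
Proof. by rewrite /wpoly hornerZ hornerXsubC mulVf ?subr_eq0. Qed.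

Lemma gw_comp_wpoly_rec n : (0 < n)%N -> (n < M)%N ->
  ('X - a%:P) * ((a - b) ^+ n)%:P * (gw n.+1 \Po wpoly) =
  a *: ('X - b%:P) ^+ n.+1 * ((gw n \Po wpoly).[a])%:P
  - 'X * ((a - b) ^+ n.+1)%:P * (gw n \Po wpoly).
Proof.
move=> n0 nM; have := congr1 (comp_poly wpoly) (gw_rec n0 nM).
rewrite /= comp_polyM !comp_polyB rmorph1 comp_polyX comp_polyM phi_num_comp_wpoly.
rewrite comp_polyZ comp_Xn_poly horner_comp horner_wpoly_a.
rewrite -mul_subab_wpoly -mul_subab_wpoly1 !(rmorphXn (@polyC K)).
move: (gw n.+1 \Po wpoly : {poly K}) (gw n \Po wpoly : {poly K}) ((gw n).[1]).
move=> Gn1 Gn c recW; rewrite -!mul_polyC polyCM exprMn !exprS in recW *.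
transitivity (- (a - b)%:P * (a - b)%:P ^+ n * ((1 - wpoly) * Gn1)); first by ring.
by rewrite recW; ring.
Qed.

Lemma g_eq_gw_comp_wpoly (g : nat -> {poly K}) :
  g 0%N = 1 ->
  (forall n : nat, (0 < n)%N ->
     ('X - a%:P) * ((a - b) ^+ n.-1)%:P * g n =
     a *: ('X - b%:P) ^+ n * ((g n.-1).[a])%:P
     - 'X * ((a - b) ^+ n)%:P * g n.-1) ->
  forall n, (0 < n)%N -> (n <= M)%N -> g n = gw n \Po wpoly.
Proof.
move=> g0 grec; elim=> [//|[|n] IH] _ nM.
  have Xa0 : 'X - a%:P != 0 by rewrite polyXsubC_eq0.
  apply: (mulfI Xa0); have := grec 1%N isT.
  rewrite /= g0 hornerC expr0 !expr1 polyC1 !mulr1 => ->.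
  by rewrite gw1 // comp_polyC -!mul_polyC polyCB; ring.
have Xa0 : ('X - a%:P) * ((a - b) ^+ n.+1)%:P != 0.
  by rewrite mulf_neq0 ?polyXsubC_eq0 // polyC_eq0 expf_neq0 // subr_eq0.
apply: (mulfI Xa0); rewrite (grec n.+2 isT) /= IH ?(ltnW nM) //.
by rewrite gw_comp_wpoly_rec.
Qed.

End Substitution.
End Recurrence.

Unset Implicit Arguments. Set Strict Implicit.

Theorem mainTheorem5 (C : numClosedFieldType) (alpha beta : C)
  (g : nat -> {poly C}) :
  alpha != beta ->
  g 0%N = 1 ->
  (forall n : nat, (0 < n)%N ->
     ('X - alpha%:P) * ((alpha - beta) ^+ n.-1)%:P * g n =
     alpha *: ('X - beta%:P) ^+ n * ((g n.-1).[alpha])%:P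
     - 'X * ((alpha - beta) ^+ n)%:P * g n.-1) ->
  forall (n : nat) (x : C), (0 < n)%N ->
  let w := (beta - x) / (beta - alpha) in
  (g n).[x] =
    n%:R^-1 *
    coef_z n.-1
      (fps_mul (fps_inv (fps_of_poly ((1 - 'X) ^+ 2)))
         (fps_mul (fps_of_poly ((((alpha - beta) * w) *: 'X + beta%:P) ^+ n))
                  (fps_inv (fps_of_poly ((1 - w *: 'X) ^+ n))))).
Proof.
move=> ab g0 grec n x n0 w.
rewrite (g_eq_gw_comp_wpoly (pchar_num C) ab g0 grec n0 (leqnn n)) horner_comp.
have -> : (wpoly alpha beta).[x] = w.
  rewrite /wpoly hornerZ hornerXsubC /w -[beta - x]opprB -[beta - alpha]opprB.
  by rewrite invrN mulrNN mulrC.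
rewrite /coef_z fps_mul_inv_1subX2 prednK // horner_poly mulr_sumr.
apply: eq_bigr => -[m /= mn] _.
have := congr1 (fun p : {poly C} => p`_m) (fps_trunc_rhs alpha beta n n w).
rewrite coef_fps_trunc coef_take_poly mn coef_comp_polyZX => ->.
rewrite coef_gw_series natrB 1?ltnW //; field.
by rewrite pnatr_eq0 -lt0n.
Qed.
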